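(* Let $n\ge1$, $y\in\mathbb{R}^n$, $\lambda\ge0$, and let $\hat\theta^{(\lambda)}=\operatorname{argmin}_{\theta\in\mathbb{R}^n}\frac12\sum_{i=1}^n(y_i-\theta_i)^2+\lambda\sum_{i=1}^{n-1}|\theta_{i+1}-\theta_i|$ be the Fused Lasso estimator. Then $$\max_{j\le n}\ \min_{j\le i\le n}\Big[\overline{y}_{[i:n]}+\frac{C_{i,j}\lambda}{n-i+1}\Big]\le\hat\theta^{(\lambda)}_n\le\min_{j\le n}\ \max_{j\le i\le n}\Big[\overline{y}_{[i:n]}-\frac{C_{i,j}\lambda}{n-i+1}\Big],$$ where $j,i$ range over $[n]$, $C_{i,j}=1$ if $i>j$ and $C_{i,j}=-1$ if $i=j$.
   Context: $[n]=\{1,\dots,n\}$, $[i:n]=\{i,\dots,n\}$, and $\overline{y}_{[i:n]}$ is the average of $y_i,\dots,y_n$. *)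

(* Vectors in R^N with N = n.+1 >= 1 are functions 'I_n.+1 -> R,
   indexed 0-based: paper index k (1-based) corresponds to ordinal k-1. *)
From mathcomp Require Import all_boot all_order all_algebra.
Set Implicit Arguments. Unset Strict Implicit. Unset Printing Implicit Defensive.
Import Order.TTheory GRing.Theory Num.Theory.
Local Open Scope ring_scope.

(* Fused Lasso objective:
   1/2 sum_k (y_k - th_k)^2 + lam * sum_{k=1}^{N-1} |th_{k+1} - th_k|.
   For k : 'I_n, lift ord0 k has value k+1 and widen_ord _ k has value k. *)
Definition fl_obj (R : realFieldType) (n : nat) (lam : R)
  (y th : 'I_n.+1 -> R) : R :=
  2^-1 * \sum_(k < n.+1) (y k - th k) ^+ 2
  + lam * \sum_(k < n) `|th (lift ord0 k) - th (widen_ord (leqnSn n) k)|.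

Definition fl_argmin (R : realFieldType) (n : nat) (lam : R)
  (y th : 'I_n.+1 -> R) : Prop :=
  forall th' : 'I_n.+1 -> R, fl_obj lam y th <= fl_obj lam y th'.

(* average of y over the tail [i : N] (0-based: indices i..n, n.+1 - i terms) *)
Definition tail_avg (R : realFieldType) (n : nat) (y : 'I_n.+1 -> R)
  (i : 'I_n.+1) : R :=
  (\sum_(k < n.+1 | (i <= k)%N) y k) / (n.+1 - i)%:R.

(* C_{i,j} = 1 if i > j, -1 if i = j (only used for i >= j) *)
Definition Cij (R : realFieldType) (n : nat) (i j : 'I_n.+1) : R :=
  if (j < i)%N then 1 else -1.

(* maximum of F over all of 'I_n.+1 (seed F ord0 is an element of the range) *)
Definition max_all (R : realFieldType) (n : nat) (F : 'I_n.+1 -> R) : R :=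
  \big[Num.max/F ord0]_(j < n.+1) F j.
Definition min_all (R : realFieldType) (n : nat) (F : 'I_n.+1 -> R) : R :=
  \big[Num.min/F ord0]_(j < n.+1) F j.

(* max / min of F over {i | j <= i} (seed F j is an element of the range) *)
Definition max_from (R : realFieldType) (n : nat) (j : 'I_n.+1)
  (F : 'I_n.+1 -> R) : R :=
  \big[Num.max/F j]_(i < n.+1 | (j <= i)%N) F i.
Definition min_from (R : realFieldType) (n : nat) (j : 'I_n.+1)
  (F : 'I_n.+1 -> R) : R :=
  \big[Num.min/F j]_(i < n.+1 | (j <= i)%N) F i.
Arguments Cij {R n} i j.

(* Shifting the tail theta_i, ..., theta_n of the minimiser by t changes the
   objective by (n - i + 1) t^2 / 2 - t S_i + lam dTV, where
   S_i = sum_(k >= i) (y_k - theta_k) and the change dTV of the total variation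
   is at most t, and equals -t for small t > 0 when theta drops just before i.
   Letting t -> 0+ gives S_i <= lam for every i, and S_i <= -lam right after
   every drop.  Given j, either theta_k <= theta_n for all k >= j, and i = j
   works, or i = k + 1 for the last k >= j with theta_k > theta_n starts a tail
   below theta_n right after a drop; averaging that tail gives the lower bound.
   The upper bound is the lower bound for (-y, -theta). *)

From mathcomp Require Import all_boot all_order all_algebra.
From mathcomp Require Import ring lra zify.
Set Implicit Arguments. Unset Strict Implicit. Unset Printing Implicit Defensive.
Import Order.TTheory GRing.Theory Num.Theory.
Local Open Scope ring_scope.

Lemma le_of_small_slack (R : realFieldType) (x y M g : R) : 0 < g ->
  (forall t, 0 < t -> t <= g -> x <= y + t * M) -> x <= y.
Proof.
move=> g_gt0 slack; apply/ler_addgt0Pr => e e_gt0.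
have M1_gt0 : 0 < `|M| + 1 by rewrite ltr_wpDl.
pose t := Num.min g (e / (`|M| + 1)).
have t_gt0 : 0 < t by rewrite lt_min g_gt0 divr_gt0.
have tM_le : t * M <= e.
  have te : t <= e / (`|M| + 1) by rewrite ge_min lexx orbT.
  have : t * (`|M| + 1) <= e by rewrite -ler_pdivlMr.
  have := ler_norm M; nra.
apply: le_trans (slack t t_gt0 _) _; first by rewrite ge_min lexx.
by rewrite lerD2l.
Qed.

Lemma tail_le_last_or_drop d (T : orderType d) n (f : 'I_n.+1 -> T) (j : 'I_n.+1) :
  (forall k : 'I_n.+1, (j <= k)%N -> (f k <= f ord_max)%O) \/
  exists k : 'I_n, [/\ (j <= k)%N, (f ord_max < f (widen_ord (leqnSn n) k))%O
    & forall l : 'I_n.+1, (k < l)%N -> (f l <= f ord_max)%O].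
Proof.
pose above := [pred k : 'I_n.+1 | (j <= k)%N && (f ord_max < f k)%O].
case: (pickP above) => [k0 above_k0 | none_above]; last first.
  by left=> k jk; move: (none_above k) => /=; rewrite jk /= leNgt => ->.
right; case: (arg_maxnP val above_k0) => k /andP[jk last_lt] k_max.
have k_lt_n : (k < n)%N.
  rewrite ltn_neqAle -ltnS ltn_ord andbT; apply: contraTneq last_lt => k_n.
  by rewrite (_ : k = ord_max) ?ltxx //; apply: val_inj.
exists (Ordinal k_lt_n); split=> //; first by rewrite (_ : widen_ord _ _ = k) //; exact: val_inj.
move=> l kl; rewrite leNgt; apply/negP => last_lt_l.
have := k_max l; rewrite /= (leq_trans jk (ltnW kl)) last_lt_l => /(_ isT).
by rewrite leqNgt kl.
Qed.

Section TailAverages.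
Variables (R : realFieldType) (n : nat).
Implicit Types (f g : 'I_n.+1 -> R) (i : 'I_n.+1).

Definition tail_sum f i := \sum_(k < n.+1 | (i <= k)%N) f k.

Lemma tail_avgE f i : tail_avg f i = tail_sum f i / (n.+1 - i)%:R.
Proof. by []. Qed.

Lemma tail_sum_cst i (c : R) : tail_sum (fun=> c) i = c *+ (n.+1 - i).
Proof. by rewrite -sumr_const_nat big_geq_mkord. Qed.

Lemma tail_sumB f g i :
  tail_sum (fun k => f k - g k) i = tail_sum f i - tail_sum g i.
Proof. exact: sumrB. Qed.

Lemma tail_avgN f i : tail_avg (fun k => - f k) i = - tail_avg f i.
Proof. by rewrite /tail_avg sumrN mulNr. Qed.

Lemma tail_sum_le_cst f i c :
  (forall k : 'I_n.+1, (i <= k)%N -> f k <= c) -> tail_sum f i <= c *+ (n.+1 - i).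
Proof. by move=> f_le; rewrite -tail_sum_cst; apply: ler_sum. Qed.

Lemma tail_avg_add_le f g i c d :
  (forall k : 'I_n.+1, (i <= k)%N -> g k <= d) ->
  tail_sum (fun k => f k - g k) i <= - c ->
  tail_avg f i + c / (n.+1 - i)%:R <= d.
Proof.
move=> g_le resid_le; have len_gt0 : 0 < (n.+1 - i)%:R :> R by rewrite ltr0n subn_gt0.
rewrite tail_avgE -mulrDl ler_pdivrMr //.
have := tail_sum_le_cst g_le; move: resid_le; rewrite tail_sumB -mulr_natr; lra.
Qed.

End TailAverages.

Section FusedLasso.
Variables (R : realFieldType) (n : nat) (lam : R) (y : 'I_n.+1 -> R).
Implicit Types (th : 'I_n.+1 -> R) (i : 'I_n.+1) (t : R).

Definition jump th (k : 'I_n) := th (lift ord0 k) - th (widen_ord (leqnSn n) k).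

Definition total_variation th := \sum_(k < n) `|jump th k|.

Definition tail_shift th i t k := th k + (if (i <= k)%N then t else 0).

Lemma fl_objE th :
  fl_obj lam y th = 2^-1 * \sum_(k < n.+1) (y k - th k) ^+ 2 + lam * total_variation th.
Proof. by []. Qed.

Lemma sqr_resid_tail_shift th i t :
  \sum_(k < n.+1) (y k - tail_shift th i t k) ^+ 2 =
  \sum_(k < n.+1) (y k - th k) ^+ 2
    - 2 * t * tail_sum (fun k => y k - th k) i + t ^+ 2 *+ (n.+1 - i).
Proof.
rewrite -tail_sum_cst /tail_sum mulr_sumr -sumrN -addrA -big_split /=.
rewrite [X in _ + X]big_mkcond -big_split /=; apply: eq_bigr => k _.
by rewrite /tail_shift; case: ifP => _; ring.
Qed.

Lemma jump_tail_shift th i t k :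
  jump (tail_shift th i t) k = jump th k + (if lift ord0 k == i then t else 0).
Proof.
rewrite /jump /tail_shift -val_eqE /= /bump leq0n add1n.
by case: ifP => ik1; case: ifP => ik; case: eqP => ki; (ring || lia).
Qed.

Lemma total_variation_shift0 th t :
  total_variation (tail_shift th ord0 t) = total_variation th.
Proof.
rewrite /total_variation; apply: eq_bigr => k _.
by rewrite jump_tail_shift eq_sym (negbTE (neq_lift _ _)) addr0.
Qed.

Lemma total_variation_shift_lift th (k : 'I_n) t :
  total_variation (tail_shift th (lift ord0 k) t) =
  total_variation th + (`|jump th k + t| - `|jump th k|).
Proof.
rewrite /total_variation (bigD1 k) // [in RHS](bigD1 k) //= jump_tail_shift eqxx.
rewrite (eq_bigr (fun l => `|jump th l|)) => [|l lk]; first ring.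
by rewrite jump_tail_shift (inj_eq lift_inj) (negbTE lk) addr0.
Qed.

Lemma fl_obj_tail_shift th i t :
  fl_obj lam y (tail_shift th i t) = fl_obj lam y th
    + (t ^+ 2 * (n.+1 - i)%:R / 2 - t * tail_sum (fun k => y k - th k) i
       + lam * (total_variation (tail_shift th i t) - total_variation th)).
Proof. by rewrite !fl_objE sqr_resid_tail_shift -mulr_natr; field. Qed.

Section Stationarity.
Variable th : 'I_n.+1 -> R.
Hypotheses (lam_ge0 : 0 <= lam) (th_min : fl_argmin lam y th).

Lemma tail_resid_le_of_variation_slope i (c g : R) : 0 < g ->
  (forall t, 0 < t -> t <= g ->
     total_variation (tail_shift th i t) <= total_variation th + c * t) ->
  tail_sum (fun k => y k - th k) i <= lam * c.
Proof.
move=> g_gt0 slope.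
apply: (@le_of_small_slack _ _ _ ((n.+1 - i)%:R / 2) _ g_gt0) => t t_gt0 t_le_g.
rewrite -(ler_pM2l t_gt0).
have gain := th_min (tail_shift th i t); rewrite fl_obj_tail_shift lerDl in gain.
have := ler_wpM2l lam_ge0 (slope t t_gt0 t_le_g); move: gain.
lra.
Qed.

Lemma tail_resid_le_lam i : tail_sum (fun k => y k - th k) i <= lam.
Proof.
rewrite -[lam]mulr1; apply: (@tail_resid_le_of_variation_slope _ _ 1) => // t t_gt0 _.
case: (unliftP ord0 i) => [k ->| ->]; last by rewrite total_variation_shift0 lerDl mul1r ltW.
rewrite total_variation_shift_lift mul1r lerD2l.
by have := ler_normD (jump th k) t; rewrite (gtr0_norm t_gt0); lra.
Qed.

Lemma tail_resid_le_Nlam_of_jump_lt0 k : jump th k < 0 ->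
  tail_sum (fun k => y k - th k) (lift ord0 k) <= - lam.
Proof.
move=> jump_lt0; rewrite -mulrN1.
apply: (@tail_resid_le_of_variation_slope _ _ (- jump th k)) => [|t t_gt0 t_le].
  by rewrite oppr_gt0.
by rewrite total_variation_shift_lift (ltr0_norm jump_lt0) ler0_norm; lra.
Qed.

Lemma fl_argmin_last_ge (j : 'I_n.+1) : exists2 i : 'I_n.+1, (j <= i)%N &
  tail_avg y i + Cij i j * lam / (n.+1 - i)%:R <= th ord_max.
Proof.
case: (tail_le_last_or_drop th j) => [tail_le | [k [jk last_lt tail_le]]].
  exists j => //; rewrite /Cij ltnn mulN1r; apply: tail_avg_add_le tail_le _.
  by rewrite opprK; apply: tail_resid_le_lam.
have k_lt_lift : (k < lift ord0 k)%N by rewrite /= /bump leq0n.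
exists (lift ord0 k); first exact: leq_trans jk (ltnW k_lt_lift).
rewrite /Cij (leq_trans _ k_lt_lift) ?ltnS // mul1r.
apply: (tail_avg_add_le (g := th)) => [l kl|]; first exact/tail_le/(leq_trans k_lt_lift).
apply: tail_resid_le_Nlam_of_jump_lt0; rewrite /jump subr_lt0.
exact: le_lt_trans (tail_le _ k_lt_lift) last_lt.
Qed.

End Stationarity.
End FusedLasso.

Lemma fl_argminN (R : realFieldType) n (lam : R) (y th : 'I_n.+1 -> R) :
  fl_argmin lam y th -> fl_argmin lam (fun k => - y k) (fun k => - th k).
Proof.
have fl_objNN z w : fl_obj lam (fun k => - z k) (fun k => - w k) = fl_obj lam z w.
  rewrite /fl_obj; congr (_ * _ + _ * _); apply: eq_bigr => k _.
    by rewrite -opprD sqrrN.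
  by rewrite -opprD normrN.
have fl_objN z w : fl_obj lam (fun k => - z k) w = fl_obj lam z (fun k => - w k).
  rewrite /fl_obj; congr (_ * _ + _ * _); apply: eq_bigr => k _.
    by rewrite -sqrrN opprD opprK.
  by rewrite -normrN opprD opprK.
by move=> th_min th'; rewrite fl_objNN fl_objN.
Qed.

Theorem theorem9 (R : realFieldType) (n : nat) (y : 'I_n.+1 -> R) (lam : R)
  (hlam : 0 <= lam) (th : 'I_n.+1 -> R) (hth : fl_argmin lam y th) :
  max_all (fun j => min_from j (fun i =>
     tail_avg y i + Cij i j * lam / (n.+1 - i)%:R)) <= th ord_max /\
  th ord_max <= min_all (fun j => max_from j (fun i =>
     tail_avg y i - Cij i j * lam / (n.+1 - i)%:R)).
Proof.
have lower j : min_from j (fun i => tail_avg y i + Cij i j * lam / (n.+1 - i)%:R)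
    <= th ord_max.
  by have [i ji le_i] := fl_argmin_last_ge hlam hth j; apply: bigmin_inf ji le_i.
have upper j : th ord_max <= max_from j (fun i =>
    tail_avg y i - Cij i j * lam / (n.+1 - i)%:R).
  have [i ji] := fl_argmin_last_ge hlam (fl_argminN hth) j; rewrite tail_avgN => le_i.
  by apply: bigmax_sup ji _; lra.
by split; [apply: bigmax_le | apply: le_bigmin].
Qed.
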